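(* Let $m\ge3$ be an integer and let $\mathbf{C}$ be a binary linear $[2^{2m-3}+2^{m-2}-1,\ 2m-2]$ code whose set of nonzero weights is $\{2^{2m-4},\,2^{2m-4}+2^{m-2}\}$. Then the code $\mathbf{C}'$ obtained from $\mathbf{C}$ by the extension construction is a minimal binary linear $[3\cdot2^{2m-4}-1,\ 2m-2,\ 2^{2m-4}]_2$ code with maximum weight $2^{2m-3}$ which violates the Ashikhmin–Barg condition. Moreover, when $m\ge4$, $\mathbf{C}'$ is self-orthogonal.
   Context: Extension construction for a binary $[N,K]$ code $\mathbf{D}$, $K\ge2$, with minimum nonzero weight $w_{min}$, maximum weight $w_{max}$ and $n'=2w_{min}-w_{max}\ge1$: choose a basis $\mathbf{r}_1,\dots,\mathbf{r}_K$ with $wt(\mathbf{r}_1)=w_{max}$, $wt(\mathbf{r}_2)=w_{min}$; the extended code is generated by $(\mathbf{1},\mathbf{r}_1),(\mathbf{0},\mathbf{r}_2),\dots,(\mathbf{0},\mathbf{r}_K)$ in $\mathbf{F}_2^{n'+N}$, with $\mathbf{1},\mathbf{0}\in\mathbf{F}_2^{n'}$. Self-orthogonal: $\mathbf{C}\subseteq\mathbf{C}^\perp$. Minimal code: nonzero codewords with nested supports are equal. Ashikhmin–Barg condition (binary): $w_{min}/w_{max}>1/2$. *)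

From HB Require Import structures.
From mathcomp Require Import all_boot all_order all_algebra.
Set Implicit Arguments. Unset Strict Implicit. Unset Printing Implicit Defensive.
Import Order.TTheory GRing.Theory Num.Theory.

Local Open Scope ring_scope.

Notation bcode n := {vspace 'rV['F_2]_n}.

Definition supp n (v : 'rV['F_2]_n) : {set 'I_n} := [set i | v 0 i != 0].
Definition wt n (v : 'rV['F_2]_n) : nat := #|supp v|.

Definition min_wt n (C : bcode n) : nat :=
  \big[minn/n.+1]_(v : 'rV['F_2]_n | (v \in C) && (v != 0)) wt v.
Definition max_wt n (C : bcode n) : nat :=
  \max_(v : 'rV['F_2]_n | v \in C) wt v.

Definition nonzero_weights_are n (C : bcode n) (a b : nat) : Prop :=
  forall w : nat, (exists2 v, (v \in C) && (v != 0) & wt v = w) <-> (w = a \/ w = b).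

Definition minimal_code n (C : bcode n) : Prop :=
  forall c1 c2, c1 \in C -> c2 \in C -> c1 != 0 -> c2 != 0 ->
    supp c1 \subset supp c2 -> c1 = c2.

Definition self_orthogonal n (C : bcode n) : Prop :=
  forall u v, u \in C -> v \in C -> u *m v^T = 0.

Definition ashikhmin_barg n (C : bcode n) : bool :=
  ((min_wt C)%:Q / (max_wt C)%:Q > 1 / 2)%R.

(* Extension construction: given the basis r = [:: r_1; ...; r_K] of a code of
   length N, the extended code of length n' + N is generated by
   (1, r_1), (0, r_2), ..., (0, r_K) with 1, 0 in F_2^{n'}. *)
Definition ext_vec n' N (first : bool) (r : 'rV['F_2]_N) : 'rV['F_2]_(n' + N) :=
  row_mx (if first then const_mx 1 else 0) r.

Definition ext_code n' N (r : seq 'rV['F_2]_N) : bcode (n' + N) :=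
  <<[seq ext_vec n' (i == 0)%N r`_i | i <- iota 0 (size r)]>>%VS.

(** The extended code consists of the words [(0, c)] and [(1, c)] with [c] in
    [C], so with [a = 2^(2m-4)], [p = 2^(m-2)] and [n' = a - p] its nonzero
    weights are [a], [a + p] (left block [0]) and [2a - p], [2a] (left block
    all ones).  They lie in [[a, 2a]], so if [supp c1] is strictly contained in
    [supp c2] the identity [wt c2 = wt c1 + wt (c1 + c2)] forces
    [wt c1 = wt (c1 + c2) = a] and [wt c2 = 2a]; but then [c1] and [c1 + c2]
    have left block [0], hence so has their sum [c2], whose weight is then at
    most [a + p < 2a].  The ratio [w_min / w_max] is exactly [1/2], and for
    [m >= 4] all weights are multiples of 4, which makes the code
    self-orthogonal. *)
From HB Require Import structures.
From mathcomp Require Import all_boot all_order all_algebra.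
From mathcomp Require Import zify.
Set Implicit Arguments. Unset Strict Implicit. Unset Printing Implicit Defensive.
Import Order.TTheory GRing.Theory Num.Theory.
Local Open Scope ring_scope.

Lemma F2_cases (x : 'F_2) : x = 0 \/ x = 1.
Proof. by case: x => [[|[|//]]] /= ?; [left | right]; apply: val_inj. Qed.

Lemma addrr_F2 n (v : 'rV['F_2]_n) : v + v = 0.
Proof. by apply/rowP => j; rewrite !mxE addrr_pchar2 // pchar_Fp. Qed.

Section Weight.
Variable n : nat.
Implicit Types u v : 'rV['F_2]_n.

Lemma wtE v : wt v = (\sum_i (v ord0 i != 0%R : nat))%N.
Proof.
by rewrite /wt /supp -sum1_card big_mkcond; apply: eq_bigr => i _; rewrite inE.
Qed.

Lemma wt0 : wt (0 : 'rV['F_2]_n) = 0%N.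
Proof. by rewrite wtE big1 // => i _; rewrite mxE eqxx. Qed.

Lemma wt_const1 : wt (const_mx 1 : 'rV['F_2]_n) = n.
Proof.
by rewrite wtE (eq_bigr (fun=> 1%N)) ?sum1_card ?card_ord // => i _; rewrite mxE.
Qed.

Lemma wt_eq0 v : (wt v == 0%N) = (v == 0).
Proof.
apply/idP/eqP => [|->]; last by rewrite wt0.
rewrite cards_eq0 => /eqP supp0; apply/rowP => j; rewrite mxE.
apply/eqP; apply: contraFT (in_set0 j) => vj.
by rewrite -supp0 inE.
Qed.

Lemma wt_leq v : (wt v <= n)%N.
Proof. by rewrite -[n in (_ <= n)%N]card_ord max_card. Qed.

Lemma wt_add u v :
  (wt (u + v) + 2 * #|supp u :&: supp v| = wt u + wt v)%N.
Proof.
rewrite !wtE -sum1_card big_distrr [X in (_ + X)%N]big_mkcond -!big_split /=.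
apply: eq_bigr => i _; rewrite !inE !mxE.
by case: (F2_cases (u 0 i)) => ->; case: (F2_cases (v 0 i)) => ->.
Qed.

Lemma dot_supp u v : (u *m v^T) 0 0 = #|supp u :&: supp v|%:R.
Proof.
rewrite !mxE -sum1_card natr_sum [RHS]big_mkcond; apply: eq_bigr => i _.
rewrite !inE !mxE.
by case: (F2_cases (u 0 i)) => ->; case: (F2_cases (v 0 i)) => ->;
  rewrite ?mulr0 ?mulr1 ?eqxx ?oner_eq0.
Qed.

End Weight.

Lemma wt_row_mx n1 n2 (x : 'rV['F_2]_n1) (y : 'rV['F_2]_n2) :
  wt (row_mx x y) = (wt x + wt y)%N.
Proof.
rewrite !wtE big_split_ord; congr (_ + _)%N; apply: eq_bigr => i _.
  by rewrite row_mxEl.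
by rewrite row_mxEr.
Qed.

Section CodeParameters.
Variables (n : nat) (C : bcode n).

Lemma min_wt_eq a c : c \in C -> c != 0 -> wt c = a ->
  (forall v, v \in C -> v != 0 -> (a <= wt v)%N) -> min_wt C = a.
Proof.
move=> Cc c0 <- minc; rewrite /min_wt -minEnat; apply/eqP; rewrite eqn_leq.
apply/andP; split; first by apply: (@bigmin_le_cond _ nat); rewrite Cc.
apply: (@le_bigmin _ nat) => [|v /andP[]]; last exact: minc.
by rewrite leEnat ltnW // ltnS wt_leq.
Qed.

Lemma max_wt_eq b c : c \in C -> wt c = b ->
  (forall v, v \in C -> (wt v <= b)%N) -> max_wt C = b.
Proof.
move=> Cc <- maxc; apply/eqP; rewrite eqn_leq leq_bigmax_cond // andbT.
by apply/bigmax_leqP => v /maxc.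
Qed.

Lemma max_wt_double_not_ashikhmin_barg :
  max_wt C = (2 * min_wt C)%N -> ~~ ashikhmin_barg C.
Proof.
rewrite /ashikhmin_barg => ->; rewrite -leNgt PoszM intrM.
have [->|w0] := eqVneq (min_wt C) 0%N; first by rewrite mulr0 invr0 mulr0.
by rewrite invfM mulrCA divff ?mulr1 // intr_eq0 eqz_nat.
Qed.

Lemma minimal_code_of_wt_range a :
  (forall v, v \in C -> v != 0 -> (a <= wt v <= 2 * a)%N) ->
  (forall u v, u \in C -> v \in C -> wt u = a -> wt v = a ->
     wt (u + v) != (2 * a)%N) ->
  minimal_code C.
Proof.
move=> range no_sum c1 c2 Cc1 Cc2 c1_0 c2_0 /setIidPl sub12.
apply/eqP; apply: contraT => c12.
have := wt_add c1 c2; rewrite sub12 -/(wt c1).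
have c2E : c2 = c1 + (c1 + c2) by rewrite addrA addrr_F2 add0r.
set d := c1 + c2 in c2E * => wt_sum.
have Cd : d \in C by rewrite memvD.
have d0 : d != 0 by apply: contra c12 => /eqP d0; rewrite [c2]c2E d0 addr0.
have := range _ Cc1 c1_0; have := range _ Cc2 c2_0; have := range _ Cd d0.
move=> /andP[? ?] /andP[? ?] /andP[? ?].
have [wt_c1 wt_d] : wt c1 = a /\ wt d = a by lia.
by move: (no_sum _ _ Cc1 Cd wt_c1 wt_d); rewrite -c2E; lia.
Qed.

Lemma self_orthogonal_doubly_even :
  (forall v, v \in C -> (4 %| wt v)%N) -> self_orthogonal C.
Proof.
move=> dvd4 u v Cu Cv; apply/rowP => i; rewrite !ord1 dot_supp mxE.
have Cuv : u + v \in C by rewrite memvD.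
move: (wt_add u v).
have /dvdnP[x ->] := dvd4 _ Cuv; have /dvdnP[y ->] := dvd4 _ Cu.
have /dvdnP[z ->] := dvd4 _ Cv; move: #|_| => k sum_eq.
have k2 : (k %% 2 = 0)%N by lia.
by rewrite -(Fp_nat_mod (isT : prime 2)) k2.
Qed.

End CodeParameters.

Section ExtensionConstruction.
Variables (n' N : nat) (C : bcode N) (r : seq 'rV['F_2]_N).
Hypothesis r_basis : basis_of C r.

Let gens : (size r).-tuple 'rV['F_2]_(n' + N) :=
  [tuple ext_vec n' (i == 0 :> nat) r`_i | i < size r].

Let gensE (i : 'I_(size r)) : gens`_i = ext_vec n' (i == 0 :> nat) r`_i.
Proof. by rewrite -tnth_nth tnth_map tnth_ord_tuple. Qed.

Let ext_code_gens : ext_code n' r = <<gens>>%VS.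
Proof. by rewrite /ext_code -val_enum_ord -map_comp. Qed.

Let rsubmx_comb (k : 'I_(size r) -> 'F_2) :
  rsubmx (\sum_i k i *: gens`_i) = \sum_i k i *: r`_i.
Proof.
apply/rowP => j; rewrite mxE !summxE; apply: eq_bigr => i _.
by rewrite !mxE gensE row_mxEr.
Qed.

Let lsubmx_comb (k : 'I_(size r) -> 'F_2) :
  lsubmx (\sum_i k i *: gens`_i) = const_mx (\sum_(i | val i == 0%N) k i).
Proof.
apply/rowP => j; rewrite !mxE summxE [RHS]big_mkcond; apply: eq_bigr => i _.
by rewrite !mxE gensE row_mxEl; case: (val i == 0%N); rewrite mxE ?mulr1 ?mulr0.
Qed.

Let r_free (k : 'I_(size r) -> 'F_2) :
  \sum_i k i *: r`_i = 0 -> forall i, k i = 0.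
Proof. exact: (@freeP _ _ _ (in_tuple r)) (basis_free r_basis) k. Qed.

Lemma mem_ext_vec i :
  (i < size r)%N -> ext_vec n' (i == 0)%N r`_i \in ext_code n' r.
Proof. by move=> ir; apply/memv_span/mapP; exists i; rewrite ?mem_iota. Qed.

Lemma dim_ext_code : \dim (ext_code n' r) = size r.
Proof.
rewrite ext_code_gens; have /eqP -> : free gens; last by rewrite size_tuple.
by apply/freeP => k /(congr1 rsubmx); rewrite rsubmx_comb linear0; apply: r_free.
Qed.

Lemma ext_code_rsubmx w : w \in ext_code n' r -> rsubmx w \in C.
Proof.
rewrite ext_code_gens => /coord_span ->; rewrite rsubmx_comb.
have /andP[/eqP <- _] := r_basis; rewrite memv_suml // => i _.
by rewrite memvZ // memv_span // mem_nth.
Qed.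

Lemma ext_code_lsubmx w :
  w \in ext_code n' r -> lsubmx w = 0 \/ lsubmx w = const_mx 1.
Proof.
rewrite ext_code_gens => /coord_span ->; rewrite lsubmx_comb.
case: (F2_cases (\sum_(i | val i == 0%N) coord gens i w)) => ->; last by right.
by left; apply/rowP => j; rewrite !mxE.
Qed.

Lemma ext_code_rsubmx_eq0 w : w \in ext_code n' r -> rsubmx w = 0 -> w = 0.
Proof.
rewrite ext_code_gens => /coord_span ->; rewrite rsubmx_comb => /r_free k0.
by rewrite big1 // => i _; rewrite k0 scale0r.
Qed.

End ExtensionConstruction.

Section TwoWeightExtension.
Variables (a p N : nat) (C : bcode N) (r : seq 'rV['F_2]_N).
Hypotheses (r_basis : basis_of C r) (p_lt_a : (p < a)%N)
  (C_wts : nonzero_weights_are C a (a + p))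
  (wt_r0 : wt r`_0 = (a + p)%N) (wt_r1 : wt r`_1 = a).

Let C' := ext_code (2 * a - (a + p)) r.

Let size_r_gt1 : (1 < size r)%N.
Proof.
rewrite ltnNge; apply: contraTN p_lt_a => r_small.
by move: wt_r1; rewrite nth_default // wt0 => <-.
Qed.

Lemma ext_code_wt w : w \in C' -> w != 0 ->
  exists2 x, x = a \/ x = (a + p)%N &
    lsubmx w = 0 /\ wt w = x
    \/ lsubmx w = const_mx 1 /\ wt w = (2 * a - (a + p) + x)%N.
Proof.
move=> C'w w0; exists (wt (rsubmx w)).
  apply/C_wts; exists (rsubmx w) => //.
  rewrite (ext_code_rsubmx r_basis C'w) /=.
  by apply: contra w0 => /eqP /(ext_code_rsubmx_eq0 r_basis C'w) ->.
rewrite -[w in wt w]hsubmxK wt_row_mx.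
by case: (ext_code_lsubmx C'w) => ->; [left | right]; rewrite ?wt0 ?wt_const1.
Qed.

Lemma ext_code_wt_range w : w \in C' -> w != 0 -> (a <= wt w <= 2 * a)%N.
Proof. by move=> C'w /(ext_code_wt C'w) [x ? [[_ ->] | [_ ->]]]; lia. Qed.

Lemma minimal_ext_code : minimal_code C'.
Proof.
apply: (minimal_code_of_wt_range ext_code_wt_range) => u v C'u C'v wt_u wt_v.
have lsubmx_wt_a w : w \in C' -> wt w = a -> lsubmx w = 0.
  move=> C'w wt_w; have w0 : w != 0 by rewrite -wt_eq0 wt_w; lia.
  by have [x ? [[-> //] | [_ ?]]] := ext_code_wt C'w w0; lia.
have [->|uv0] := eqVneq (u + v) 0; first by rewrite wt0; lia.
have [x ? [[_ ->] | [l1 _]]] := ext_code_wt (memvD C'u C'v) uv0; first by lia.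
have n'0 : (0 < 2 * a - (a + p))%N by lia.
move: l1 => /rowP/(_ (Ordinal n'0)).
rewrite linearD /= lsubmx_wt_a // lsubmx_wt_a // addr0 !mxE => /eqP.
by rewrite eq_sym oner_eq0.
Qed.

Lemma min_wt_ext_code : min_wt C' = a.
Proof.
apply: (min_wt_eq (c := ext_vec _ false r`_1)); first exact: mem_ext_vec.
- by rewrite -wt_eq0 wt_row_mx wt0 wt_r1; lia.
- by rewrite wt_row_mx wt0 wt_r1.
- by move=> v C'v /(ext_code_wt_range C'v) /andP[].
Qed.

Lemma max_wt_ext_code : max_wt C' = (2 * a)%N.
Proof.
apply: (max_wt_eq (c := ext_vec _ true r`_0)).
- exact: mem_ext_vec (ltnW size_r_gt1).
- by rewrite wt_row_mx wt_const1 wt_r0; lia.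
- move=> v C'v; have [->|v0] := eqVneq v 0; first by rewrite wt0.
  by case/andP: (ext_code_wt_range C'v v0).
Qed.

Lemma self_orthogonal_ext_code : (4 %| a)%N -> (4 %| p)%N -> self_orthogonal C'.
Proof.
move=> a4 p4; apply: self_orthogonal_doubly_even => w C'w.
have [->|w0] := eqVneq w 0; first by rewrite wt0.
by have [x ? [[_ ->] | [_ ->]]] := ext_code_wt C'w w0; lia.
Qed.

End TwoWeightExtension.

Theorem proposition5p4 (m : nat) (hm : (3 <= m)%N)
  (C : bcode (2 ^ (2 * m - 3) + 2 ^ (m - 2) - 1))
  (hdim : \dim C = (2 * m - 2)%N)
  (hw : nonzero_weights_are C (2 ^ (2 * m - 4)) (2 ^ (2 * m - 4) + 2 ^ (m - 2)))
  (r : seq 'rV['F_2]_(2 ^ (2 * m - 3) + 2 ^ (m - 2) - 1))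
  (hr : basis_of C r)
  (hr1 : wt r`_0 = (2 ^ (2 * m - 4) + 2 ^ (m - 2))%N)
  (hr2 : wt r`_1 = (2 ^ (2 * m - 4))%N) :
  let n' := (2 * 2 ^ (2 * m - 4) - (2 ^ (2 * m - 4) + 2 ^ (m - 2)))%N in
  let C' := ext_code n' r in
  [/\ (n' + (2 ^ (2 * m - 3) + 2 ^ (m - 2) - 1) = 3 * 2 ^ (2 * m - 4) - 1)%N,
      minimal_code C' /\ \dim C' = (2 * m - 2)%N,
      min_wt C' = (2 ^ (2 * m - 4))%N /\ max_wt C' = (2 ^ (2 * m - 3))%N,
      ~~ ashikhmin_barg C'
    & ((4 <= m)%N -> self_orthogonal C')].
Proof.
move=> n' C'.
have p_lt_a : (2 ^ (m - 2) < 2 ^ (2 * m - 4))%N by rewrite ltn_exp2l //; lia.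
have max_wtE : (2 ^ (2 * m - 3) = 2 * 2 ^ (2 * m - 4))%N.
  by rewrite -expnS; congr (_ ^ _)%N; lia.
have min_wtC' := min_wt_ext_code hr p_lt_a hw hr1 hr2.
have max_wtC' := max_wt_ext_code hr p_lt_a hw hr1 hr2.
split.
- by rewrite /n' max_wtE; lia.
- split; first exact: minimal_ext_code hr p_lt_a hw hr1 hr2.
  by rewrite (dim_ext_code _ hr) -hdim (size_basis (X := in_tuple r)).
- by rewrite min_wtC' max_wtC' max_wtE.
- by apply: max_wt_double_not_ashikhmin_barg; rewrite min_wtC'.
- have dvd4 k : (2 <= k)%N -> (4 %| 2 ^ k)%N by apply: (dvdn_exp2l 2).
  move=> m4; apply: self_orthogonal_ext_code hr p_lt_a hw hr1 hr2 _ _;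
    by apply: dvd4; lia.
Qed.
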